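(* Let $\hat C\subseteq\mathbb Z^2$ be a set whose set of $x$-coordinates $\hat C_/$ is bounded. Let $\hat F_1,\dots,\hat F_t$ ($t\ge1$) be the intersections of $\hat C$ with those vertical lines $\{x=c\}$ that meet $\hat C$ in a finite nonempty set, and let $\hat K_1,\dots,\hat K_r$ be the intersections of $\hat C$ with those vertical lines that meet $\hat C$ in an infinite set; for a point set $S$ in one vertical line $\{x=c\}$ write $\operatorname{Col}(S)=\{(c,y):y\in\mathbb Z\}$. Let $\ell$ be the minimal number of elements of an integer interval $[a,b]$ for which there exists $W\subseteq\mathbb Z$ with $\hat C_/+W=[a,b]$. Suppose that for each $i\in\{1,\dots,r\}$ there are sets $\hat S_{i,1},\dots,\hat S_{i,n_i}$ with $\hat S_{i,1}\cup\cdots\cup\hat S_{i,n_i}=\hat K_i$ such that for each $i,j$ there exist (possibly empty) sets $\hat W_{i,j;\mu},\hat U_{i,j;\nu}\subseteq\mathbb Z^2$ ($1\le\mu\le t$, $1\le\nu\le r$) with \[\operatorname{Col}(\hat K_i)\setminus\hat S_{i,j}=\bigcup_{\mu=1}^{t}\bigl(\hat F_\mu+\hat W_{i,j;\mu}\bigr)\cup\bigcup_{\nu=1}^{r}\bigl(\hat K_\nu+\hat U_{i,j;\nu}\bigr).\] Then for every integer $m$ with \[m\ge(\ell+1)\Bigl(t+\sum_{i=1}^r n_i\Bigr),\] the set $C=\pi_m(\hat C)$ arises as a minimal additive complement in $\mathbb Z$.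
   Context: Sums of subsets of $\mathbb Z^2$ or $\mathbb Z$ are Minkowski sums $X+Y=\{x+y:x\in X,y\in Y\}$. For $m\ge1$, $\pi_m:\mathbb Z^2\to\mathbb Z$ is the map $(x,y)\mapsto x+my$ (equivalently the quotient $\mathbb Z^2\to\mathbb Z^2/\mathbb Z(m,-1)\cong\mathbb Z$). $C\subseteq\mathbb Z$ is a minimal additive complement (MAC) to $W\subseteq\mathbb Z$ if $C+W=\mathbb Z$ and no proper subset $C'\subsetneq C$ satisfies $C'+W=\mathbb Z$; $C$ arises as a MAC if such a $W$ exists. *)

From Stdlib Require Import ZArith List.
Import ListNotations.
Open Scope Z_scope.

Definition set1 := Z -> Prop.
Definition set2 := (Z * Z)%type -> Prop.

Definition sumset1 (X Y : set1) : set1 :=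
  fun z => exists x y, X x /\ Y y /\ z = x + y.
Definition sumset2 (X Y : set2) : set2 :=
  fun p => exists x y, X x /\ Y y /\ p = (fst x + fst y, snd x + snd y).

Definition pi (m : Z) (p : Z * Z) : Z := fst p + m * snd p.
Definition pi_image (m : Z) (Ch : set2) : set1 :=
  fun z => exists p, Ch p /\ z = pi m p.

Definition is_MAC (C W : set1) : Prop :=
  (forall z, sumset1 C W z) /\
  forall C' : set1, (forall z, C' z -> C z) -> (exists z, C z /\ ~ C' z) ->
    ~ (forall z, sumset1 C' W z).
Definition arises_as_MAC (C : set1) : Prop := exists W : set1, is_MAC C W.

Definition xcoords (Ch : set2) : set1 := fun x => exists y, Ch (x, y).
Definition bounded1 (A : set1) : Prop := exists B, forall x, A x -> Z.abs x <= B.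
Definition fiber (Ch : set2) (c : Z) : set2 := fun p => Ch p /\ fst p = c.
Definition Col (c : Z) : set2 := fun p => fst p = c.
Definition fin_set (A : set1) : Prop := exists l : list Z, forall y, A y -> In y l.

Definition interval_complement (A : set1) (a b : Z) : Prop :=
  a <= b /\ exists W : set1, forall z, sumset1 A W z <-> (a <= z /\ z <= b).
Definition is_ell (Ch : set2) (l : Z) : Prop :=
  (exists a b, interval_complement (xcoords Ch) a b /\ l = b - a + 1) /\
  (forall a b, interval_complement (xcoords Ch) a b -> l <= b - a + 1).

From Stdlib Require Import ZArith List Lia Classical.
Import ListNotations.
Open Scope Z_scope.

(** Write Ĉ_/ + W₀ = [a, a+l-1] and let N = t + Σ n_i count the slots: one per
    finite column and one per piece Ŝ_{i,j}.  The residues s(l+1), 0 <= s < N,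
    modulo m are markers.  As m >= (l+1)N, every non-marker lies in a window of
    l consecutive non-markers, which π_m(Ĉ) + (W₀ - a + window) covers.  The
    marker class of slot s is s(l+1) + π_m(Col 0), covered by π_m(Ĉ + D_s) for
    a set D_s of planar shifts with Col 0 ⊆ Ĉ + D_s.  The D_s are chosen so that
    each point P of Ĉ is, for some slot, the only point of Ĉ reaching some point
    of Col 0 through D_s; markers having unique representations, the matching
    marker is then covered by π_m(P) alone, which gives minimality.  For a piece
    Ŝ_{i,j} the hypothesis on Col(K̂_i) \ Ŝ_{i,j} supplies such shifts.  For a
    finite column F take the vertical shifts avoiding every M y₁ - y₂ (y₁ ≠ y₂
    in F, M > 4 max|F|): if they missed a point of the column, F would be
    invariant under a nonzero translation. *)

Lemma small_multiple_zero (d k : Z) : Z.abs (d * k) < d -> k = 0.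
Proof. intro H. destruct (Z.eq_dec k 0); [assumption|]. exfalso. nia. Qed.

Section Markers.

Variables N l m : Z.
Hypothesis Hl : 1 <= l.
Hypothesis Hm : (l + 1) * N <= m.

Definition marker (x : Z) : Prop :=
  exists s q, 0 <= s < N /\ x = s * (l + 1) + m * q.

Definition marker_free (p : Z) : Prop :=
  forall i, 0 <= i < l -> ~ marker (p + i).

Lemma marker_eq_inv s t e q q' :
  0 <= s < N -> 0 <= t < N -> Z.abs e <= l ->
  s * (l + 1) + e + m * q = t * (l + 1) + m * q' -> s = t /\ e = 0 /\ q = q'.
Proof.
  intros Hs Ht He Heq.
  assert (Hq : q - q' = 0).
  { apply (small_multiple_zero m).
    assert (Z.abs ((t - s) * (l + 1)) <= (N - 1) * (l + 1)) by nia.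
    replace (m * (q - q')) with ((t - s) * (l + 1) - e) by lia. lia. }
  assert (Hst : t - s = 0) by (apply (small_multiple_zero (l + 1)); nia).
  lia.
Qed.

Hypothesis HN : 1 <= N.

Lemma marker_free_window z :
  ~ marker z -> exists p, marker_free p /\ p <= z < p + l.
Proof.
  intro Hz.
  assert (Hm0 : 0 < m) by nia.
  pose proof (Z.div_mod z m ltac:(lia)) as Hzd.
  pose proof (Z.mod_pos_bound z m Hm0) as Hr.
  set (r := z mod m) in *; set (q0 := z / m) in *.
  pose proof (Z.div_mod r (l + 1) ltac:(lia)) as Hrd.
  pose proof (Z.mod_pos_bound r (l + 1) ltac:(lia)) as Hi.
  set (s0 := r / (l + 1)) in *; set (i0 := r mod (l + 1)) in *.
  assert (0 <= s0) by (apply Z.div_pos; lia).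
  destruct (Z_lt_le_dec s0 N) as [Hs0 | Hs0].
  - assert (i0 <> 0) by (intro; apply Hz; exists s0, q0; lia).
    exists (s0 * (l + 1) + 1 + m * q0); split; [|lia].
    intros i Hi' (t & q & Ht & Heq).
    destruct (marker_eq_inv s0 t (1 + i) q0 q) as (_ & He & _); lia.
  - (* past the last marker, the gap up to the next period has length >= l *)
    exists (r - l + 1 + m * q0); split; [|lia].
    intros i Hi' (t & q & Ht & Heq).
    assert (Hq : q - q0 = 0).
    { apply (small_multiple_zero m).
      replace (m * (q - q0)) with (r - l + 1 + i - t * (l + 1)) by lia. nia. }
    nia.
Qed.

End Markers.

Lemma fin_set_bounded (A : set1) :
  fin_set A -> exists R, 0 <= R /\ forall y, A y -> Z.abs y <= R.
Proof.
  intros [L HL].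
  enough (HLb : exists R, 0 <= R /\ forall y, In y L -> Z.abs y <= R).
  { destruct HLb as (R & HR & HLb). eauto. }
  clear HL. induction L as [|x L (R & HR & IH)].
  - exists 0. split; [lia | intros y []].
  - exists (Z.abs x + R). split; [lia|].
    intros y [<- | Hy]; [lia | specialize (IH y Hy); lia].
Qed.

Lemma fin_set_fibers (Ch : set2) (F : list Z) :
  (forall c, In c F -> fin_set (fun y => Ch (c, y))) ->
  fin_set (fun y => exists c, In c F /\ Ch (c, y)).
Proof.
  induction F as [|c0 F IH]; intro Hfin.
  - exists []. intros y (c & [] & _).
  - destruct (Hfin c0 (or_introl eq_refl)) as [L0 HL0].
    destruct IH as [L HL]; [intros c Hc; apply Hfin; right; exact Hc|].
    exists (L0 ++ L). intros y (c & [<- | Hc] & Hy); apply in_or_app.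
    + left. exact (HL0 y Hy).
    + right. exact (HL y (ex_intro _ c (conj Hc Hy))).
Qed.

Lemma translation_closed_bounded (Y : set1) (R s y0 : Z) :
  Y y0 -> (forall y, Y y -> Z.abs y <= R) ->
  (forall y, Y y -> Y (y + s)) -> s = 0.
Proof.
  intros Hy0 HY Hs.
  assert (Hiter : forall k : nat, Y (y0 + Z.of_nat k * s)).
  { induction k as [|k IHk].
    - rewrite Z.add_0_r. exact Hy0.
    - replace (y0 + Z.of_nat (S k) * s) with (y0 + Z.of_nat k * s + s) by lia.
      apply Hs, IHk. }
  pose proof (HY _ Hy0).
  pose proof (HY _ (Hiter (Z.to_nat (2 * R + 1)))) as Hfar.
  rewrite Z2Nat.id in Hfar by lia.
  destruct (Z.eq_dec s 0) as [|Hs0]; [assumption|]. exfalso. nia.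
Qed.

Definition diff_code (M : Z) (Y : set1) (q : Z) : Prop :=
  exists y1 y2, Y y1 /\ Y y2 /\ y1 <> y2 /\ q = M * y1 - y2.

Lemma exists_shift_not_diff_code (Y : set1) (R M : Z) :
  4 * R < M -> (forall y, Y y -> Z.abs y <= R) -> (exists y, Y y) ->
  forall z, exists y, Y y /\ ~ diff_code M Y (z - y).
Proof.
  intros HM HY [y1 Hy1] z. apply NNPP. intro Hn.
  assert (Hall : forall y, Y y -> diff_code M Y (z - y)).
  { intros y Hy. apply NNPP. intro H. apply Hn. eauto. }
  destruct (Hall y1 Hy1) as (ys & yb & Hys & Hyb & _ & Hb).
  set (s := M * ys - z).
  (* the leading digit [ys] of [z - y] in base [M] does not depend on [y] *)
  assert (Hshift : forall y, Y y -> Y (y + s) /\ y + s <> ys).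
  { intros y Hy. destruct (Hall y Hy) as (ya & yc & Hya & Hyc & Hne & Hc).
    assert (Hyas : ya - ys = 0).
    { apply (small_multiple_zero M).
      pose proof (HY _ Hy). pose proof (HY _ Hy1).
      pose proof (HY _ Hyb). pose proof (HY _ Hyc). lia. }
    replace (y + s) with yc by (unfold s; lia).
    split; [exact Hyc | lia]. }
  assert (Hs0 : s = 0).
  { apply (translation_closed_bounded Y R s y1 Hy1 HY).
    intros y Hy. apply Hshift, Hy. }
  destruct (Hshift ys Hys) as [_ Hne]. lia.
Qed.

Definition covers_column0 (Ch D : set2) : Prop := forall y, sumset2 Ch D (0, y).

Definition isolated_by (Ch D : set2) (P : Z * Z) : Prop :=
  exists y, forall P' d, Ch P' -> D d ->
    (fst P' + fst d, snd P' + snd d) = (0, y) -> P' = P.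

Definition finite_column_shifts (Ch : set2) (M c : Z) : set2 :=
  fun d => fst d = - c /\ ~ diff_code M (fun y => Ch (c, y)) (snd d).

Lemma finite_column_covers (Ch : set2) (c R M : Z) :
  4 * R < M -> (forall y, Ch (c, y) -> Z.abs y <= R) -> (exists y, Ch (c, y)) ->
  covers_column0 Ch (finite_column_shifts Ch M c).
Proof.
  intros HM HR Hne y.
  destruct (exists_shift_not_diff_code _ R M HM HR Hne y) as (y' & Hy' & Hnd).
  exists (c, y'), (- c, y - y').
  split; [exact Hy'|]. split; [split; [reflexivity | exact Hnd]|].
  simpl. f_equal; ring.
Qed.

Lemma finite_column_isolates (Ch : set2) (M c y0 : Z) :
  Ch (c, y0) -> isolated_by Ch (finite_column_shifts Ch M c) (c, y0).
Proof.
  intro Hy0. exists (M * y0).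
  intros [c' y'] [d1 d2] Hc' [Hd1 Hnd] Heq. simpl in *. injection Heq as E1 E2.
  assert (c' = c) by lia. subst c'.
  destruct (Z.eq_dec y' y0) as [-> | Hne]; [reflexivity|].
  exfalso. apply Hnd. exists y0, y'. repeat split; auto. lia.
Qed.

Definition piece_shifts (Ch : set2) (k : Z) (S : set2) : set2 :=
  fun d => d = (- k, 0) \/
           forall c y, Ch (c, y) -> c + fst d = 0 -> ~ S (k, y + snd d).

Lemma piece_covers (Ch S : set2) (k : Z) (X : Z -> set2) :
  (forall y, S (k, y) -> Ch (k, y)) ->
  (forall p, Col k p /\ ~ S p <-> exists c, sumset2 (fiber Ch c) (X c) p) ->
  covers_column0 Ch (piece_shifts Ch k S).
Proof.
  intros HS Hdec y.
  destruct (classic (S (k, y))) as [Hy | Hy].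
  - exists (k, y), (- k, 0).
    split; [exact (HS y Hy)|]. split; [left; reflexivity|].
    simpl. f_equal; ring.
  - destruct (proj1 (Hdec (k, y)) (conj eq_refl Hy))
      as (c & [c' y'] & w & [HP Hc'] & Hw & Heq).
    simpl in Hc'. subst c'. injection Heq as E1 E2.
    exists (c, y'), (fst w - k, snd w).
    split; [exact HP|]. split.
    + right. intros c'' y'' HP'' Hcol. simpl in Hcol.
      assert (c'' = c) by lia. subst c''.
      enough (Hout : Col k (c + fst w, y'' + snd w) /\ ~ S (c + fst w, y'' + snd w)).
      { rewrite <- E1 in Hout. apply Hout. }
      apply Hdec. exists c, (c, y''), w. repeat split; auto.
    + simpl. f_equal; lia.
Qed.

Lemma piece_isolates (Ch S : set2) (k y0 : Z) :
  S (k, y0) -> isolated_by Ch (piece_shifts Ch k S) (k, y0).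
Proof.
  intro HS. exists y0.
  intros [c y] d Hc [-> | Hd] Heq; simpl in Heq; injection Heq as E1 E2.
  - f_equal; lia.
  - exfalso. apply (Hd c y Hc E1). replace (y + snd d) with y0 by lia. exact HS.
Qed.

Section Assembly.

Variables (Ch : set2) (W0 : set1) (a l m : Z) (Ds : list set2).
Hypothesis Hl : 1 <= l.
Hypothesis HW0 : forall z, sumset1 (xcoords Ch) W0 z <-> a <= z <= a + l - 1.
Hypothesis Hm : (l + 1) * Z.of_nat (length Ds) <= m.
Hypothesis Hcovers : forall D, In D Ds -> covers_column0 Ch D.
Hypothesis Hisolated : forall P, Ch P -> exists D, In D Ds /\ isolated_by Ch D P.

Local Notation N := (Z.of_nat (length Ds)).

Definition mac_complement : set1 := fun w =>
  (exists w0 p q, W0 w0 /\ marker_free N l m p /\ w = w0 - a + p + m * q) \/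
  (exists s D d, nth_error Ds s = Some D /\ D d /\ xcoords Ch (- fst d) /\
                 w = Z.of_nat s * (l + 1) + pi m d).

Lemma xcoords_window c w0 : xcoords Ch c -> W0 w0 -> a <= c + w0 <= a + l - 1.
Proof. intros Hc Hw0. apply HW0. exists c, w0. auto. Qed.

Lemma xcoords_close c c' : xcoords Ch c -> xcoords Ch c' -> Z.abs (c - c') <= l - 1.
Proof.
  intros Hc Hc'.
  destruct (proj2 (HW0 a) ltac:(lia)) as (_ & w0 & _ & Hw0 & _).
  pose proof (xcoords_window c w0 Hc Hw0).
  pose proof (xcoords_window c' w0 Hc' Hw0). lia.
Qed.

Lemma slots_nonempty : 1 <= N.
Proof.
  destruct (proj2 (HW0 a) ltac:(lia)) as (c & _ & [y Hy] & _).
  destruct (Hisolated _ Hy) as (D & HD & _).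
  destruct Ds; [destruct HD | simpl; lia].
Qed.

Lemma complement_covers z : sumset1 (pi_image m Ch) mac_complement z.
Proof.
  destruct (classic (marker N l m z)) as [(s & q & Hs & ->) | Hz].
  - destruct (nth_error Ds (Z.to_nat s)) as [D|] eqn:HD.
    2: { apply nth_error_None in HD. lia. }
    destruct (Hcovers D (nth_error_In _ _ HD) q) as ([c y] & d & HP & Hd & Heq).
    simpl in Heq. injection Heq as E1 E2.
    exists (pi m (c, y)), (Z.of_nat (Z.to_nat s) * (l + 1) + pi m d).
    split; [exists (c, y); auto|]. split.
    + right. exists (Z.to_nat s), D, d. repeat split; auto.
      exists y. replace (- fst d) with c by lia. exact HP.
    + unfold pi. simpl. rewrite Z2Nat.id by lia. nia.
  - destruct (marker_free_window N l m Hl Hm slots_nonempty z Hz) as (p & Hp & Hzp).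
    destruct (proj2 (HW0 (z - p + a)) ltac:(lia)) as (c & w0 & [y Hy] & Hw0 & Heq).
    exists (pi m (c, y)), (w0 - a + p + m * (- y)).
    split; [exists (c, y); auto|]. split.
    + left. exists w0, p, (- y). auto.
    + unfold pi. simpl. lia.
Qed.

Lemma complement_minimal (C' : set1) :
  (forall z, C' z -> pi_image m Ch z) -> (exists z, pi_image m Ch z /\ ~ C' z) ->
  ~ (forall z, sumset1 C' mac_complement z).
Proof.
  intros HC' (z0 & (P & HP & ->) & Hz0) Hcov.
  destruct (Hisolated P HP) as (D & HD & y & Hiso).
  destruct (In_nth_error _ _ HD) as [s Hs].
  assert (Hslot : (s < length Ds)%nat) by (apply nth_error_Some; congruence).
  destruct (Hcov (Z.of_nat s * (l + 1) + m * y)) as (e & w & He & Hw & Heq).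
  destruct (HC' e He) as ([c' y'] & HP' & ->).
  assert (Hc' : xcoords Ch c') by (exists y'; exact HP').
  unfold pi in Heq. simpl in Heq.
  destruct Hw as [(w0 & p & q & Hw0 & Hp & ->) | (t & D' & d & Ht & Hd & Hxd & ->)].
  - pose proof (xcoords_window c' w0 Hc' Hw0).
    apply (Hp (c' + w0 - a)); [lia|].
    exists (Z.of_nat s), (y - y' - q). split; [lia | nia].
  - assert (Htslot : (t < length Ds)%nat) by (apply nth_error_Some; congruence).
    pose proof (xcoords_close c' (- fst d) Hc' Hxd).
    unfold pi in Heq.
    destruct (marker_eq_inv N l m Hl Hm (Z.of_nat t) (Z.of_nat s)
                (c' + fst d) (y' + snd d) y) as (Hts & Hcd & Hy); [lia | lia | lia | nia |].
    assert (t = s) by lia. subst t.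
    rewrite Hs in Ht. injection Ht as <-.
    apply Hz0.
    replace P with (c', y'); [exact He|].
    apply (Hiso (c', y') d HP' Hd). simpl. f_equal; lia.
Qed.

Lemma pi_image_arises_as_MAC : arises_as_MAC (pi_image m Ch).
Proof. exists mac_complement. split; [exact complement_covers | exact complement_minimal]. Qed.

End Assembly.

Definition slot_shifts (Ch : set2) (M : Z) (F K : list Z) (n : Z -> nat)
    (S : Z -> nat -> set2) : list set2 :=
  map (finite_column_shifts Ch M) F ++
  flat_map (fun k => map (fun j => piece_shifts Ch k (S k j)) (seq 0 (n k))) K.

Lemma length_slot_shifts Ch M F K n S :
  length (slot_shifts Ch M F K n S) = (length F + list_sum (map n K))%nat.
Proof.
  unfold slot_shifts. rewrite length_app, length_map, length_flat_map. do 2 f_equal.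
  apply map_ext. intro k. rewrite length_map. apply length_seq.
Qed.

Lemma in_slot_shifts Ch M F K n S D :
  In D (slot_shifts Ch M F K n S) <->
  (exists c, In c F /\ D = finite_column_shifts Ch M c) \/
  (exists k j, In k K /\ (j < n k)%nat /\ D = piece_shifts Ch k (S k j)).
Proof.
  unfold slot_shifts. rewrite in_app_iff, in_map_iff, in_flat_map. split.
  - intros [(c & <- & Hc) | (k & Hk & HD)]; [left; eauto | right].
    apply in_map_iff in HD as (j & <- & Hj). apply in_seq in Hj.
    exists k, j. repeat split; [exact Hk | lia].
  - intros [(c & Hc & ->) | (k & j & Hk & Hj & ->)]; [left; eauto | right].
    exists k. split; [exact Hk|]. apply in_map_iff. exists j.
    split; [reflexivity | apply in_seq; lia].
Qed.

Lemma sumset2_fibers_union (Ch : set2) (F K : list Z) (Wf Uf : Z -> set2) p :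
  (exists c, In c F /\ sumset2 (fiber Ch c) (Wf c) p) \/
  (exists c, In c K /\ sumset2 (fiber Ch c) (Uf c) p) <->
  exists c, sumset2 (fiber Ch c) (fun w => In c F /\ Wf c w \/ In c K /\ Uf c w) p.
Proof.
  split.
  - intros [(c & Hc & P & w & HP & Hw & Heq) | (c & Hc & P & w & HP & Hw & Heq)];
      exists c, P, w; auto.
  - intros (c & P & w & HP & [[Hc Hw] | [Hc Hw]] & Heq); [left | right];
      exists c; (split; [exact Hc | exists P, w; auto]).
Qed.

Theorem theorem7
  (Ch : set2)
  (Hbd : bounded1 (xcoords Ch))
  (* Fcols: the columns c meeting Ch in a finite nonempty set (F_1..F_t) *)
  (Fcols : list Z) (HFnd : NoDup Fcols)
  (HF : forall c, In c Fcols <->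
          (exists y, Ch (c, y)) /\ fin_set (fun y => Ch (c, y)))
  (Ht : (1 <= length Fcols)%nat)
  (* Kcols: the columns c meeting Ch in an infinite set (K_1..K_r) *)
  (Kcols : list Z) (HKnd : NoDup Kcols)
  (HK : forall c, In c Kcols <-> ~ fin_set (fun y => Ch (c, y)))
  (l : Z) (Hl : is_ell Ch l)
  (* for each K-column k: sets S k 0, ..., S k (n k - 1) *)
  (n : Z -> nat) (S : Z -> nat -> set2)
  (Hcover : forall k, In k Kcols -> forall p,
      fiber Ch k p <-> exists j, (j < n k)%nat /\ S k j p)
  (Hdec : forall k, In k Kcols -> forall j, (j < n k)%nat ->
      exists (Wf Uf : Z -> set2), forall p,
        (Col k p /\ ~ S k j p) <->
        ((exists c, In c Fcols /\ sumset2 (fiber Ch c) (Wf c) p) \/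
         (exists c, In c Kcols /\ sumset2 (fiber Ch c) (Uf c) p)))
  (m : Z)
  (Hm : m >= (l + 1) * Z.of_nat (length Fcols + list_sum (map n Kcols))) :
  arises_as_MAC (pi_image m Ch).
Proof.
  (* [Hbd] and [Ht] follow from the interval hypothesis in [Hl], and repeated
     columns would only add slots, so [HFnd] and [HKnd] are not needed. *)
  destruct Hl as [(a & b & (Hab & W0 & HW0) & ->) _].
  destruct (fin_set_bounded _ (fin_set_fibers Ch Fcols (fun c Hc => proj2 (proj1 (HF c) Hc))))
    as (R & _ & HR).
  apply (pi_image_arises_as_MAC Ch W0 a (b - a + 1) m (slot_shifts Ch (4 * R + 1) Fcols Kcols n S));
    [lia | intro z; rewrite HW0; lia | rewrite length_slot_shifts; lia | |].
  - intros D HD. apply in_slot_shifts in HD as [(c & Hc & ->) | (k & j & Hk & Hj & ->)].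
    + apply (finite_column_covers Ch c R); [lia | | exact (proj1 (proj1 (HF c) Hc))].
      intros y Hy. exact (HR y (ex_intro _ c (conj Hc Hy))).
    + destruct (Hdec k Hk j Hj) as (Wf & Uf & HWU).
      apply piece_covers with (X := fun c w => In c Fcols /\ Wf c w \/ In c Kcols /\ Uf c w).
      * intros y HSy. apply (Hcover k Hk (k, y)). eauto.
      * intro p. rewrite HWU. apply sumset2_fibers_union.
  - intros [c y0] Hy0. destruct (classic (fin_set (fun y => Ch (c, y)))) as [Hfin | Hinf].
    + exists (finite_column_shifts Ch (4 * R + 1) c).
      split; [|exact (finite_column_isolates Ch _ c y0 Hy0)].
      apply in_slot_shifts. left. exists c. split; [apply HF; eauto | reflexivity].
    + apply HK in Hinf.
      destruct (proj1 (Hcover c Hinf (c, y0)) (conj Hy0 eq_refl)) as (j & Hj & HSj).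
      exists (piece_shifts Ch c (S c j)). split; [|exact (piece_isolates Ch _ c y0 HSj)].
      apply in_slot_shifts. right. exists c, j. auto.
Qed.
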